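(* Let $q$ be even and let $U$ be an intersecting family of polynomials over $\mathbb{F}_q$ of degree at most $2$ with $|U|>\frac{q^2+q}{2}$. Suppose $H\subseteq U$ has more than $\frac{q^2}{2}$ elements and there exist $\alpha,\beta\in\mathbb{F}_q$ with $h(\alpha)=\beta$ for all $h\in H$. Then $f(\alpha)=\beta$ for every $f\in U$.
   Context: A set of polynomials over $\mathbb{F}_q$ is intersecting if for any two members $f_1,f_2$ the graphs $\{(x,f_i(x)):x\in\mathbb{F}_q\}$ share at least one point. *)

From HB Require Import structures.
From mathcomp Require Import all_boot all_order all_algebra all_field.
Set Implicit Arguments. Unset Strict Implicit. Unset Printing Implicit Defensive.
Import GRing.Theory.
Local Open Scope ring_scope.

Definition intersecting (F : finFieldType) (U : seq {poly F}) : Prop :=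
  forall f1 f2, f1 \in U -> f2 \in U -> exists x : F, f1.[x] = f2.[x].

From HB Require Import structures.
From mathcomp Require Import all_boot all_order all_algebra all_field.
From mathcomp Require Import ring zify.
Set Implicit Arguments.
Unset Strict Implicit.
Unset Printing Implicit Defensive.

(* In characteristic 2 a polynomial of degree at most 2 reads
   h = h(alpha) + h_1 (x - alpha) + h_2 (x - alpha)^2, and inside an
   intersecting family it is determined by (h_1, h_2).  Fix f in U with
   f(alpha) <> beta.  If h(alpha) = beta and h_1 = b <> f_1, then h meets f at
   x = alpha + 1/u only when h_2 - f_2 = C u^2 + B u with B, C <> 0; this map
   is additive with kernel {0, -B/C}, so at most q/2 values of h_2 occur.
   Counting slice by slice along h_1: if some g in U with g(alpha) <> beta has
   g_1 <> f_1, every slice of H, including h_1 = f_1, has at most q/2 members,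
   so |H| <= q^2/2; otherwise the slices h_1 <> f_1 of U have at most q/2
   members and the slice h_1 = f_1 at most q, so |U| <= (q^2 + q)/2. *)

Import GRing.Theory.
Local Open Scope ring_scope.

Lemma card_imset_additive (V W : finZmodType) (phi : V -> W) :
  {morph phi : u v / u + v} ->
  (#|[set phi u | u : V]| * #|[set u | phi u == 0%R]|)%N = #|V|.
Proof.
move=> phiD.
have phiB u v : phi (u - v) = phi u - phi v.
  by apply: (canRL (addrK (phi v))); rewrite -phiD subrK.
have card_fiber u0 : #|[set u | phi u == phi u0]| = #|[set u | phi u == 0]|.
  rewrite -(card_imset [set u | phi u == 0] (addIr u0)).
  congr #|pred_of_set _|; apply/setP => u; rewrite inE.
  apply/eqP/imsetP => [Eu | [z]]; last by rewrite inE => /eqP z0 ->; rewrite phiD z0 add0r.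
  by exists (u - u0); rewrite ?inE ?phiB ?Eu ?subrr ?subrK.
rewrite -sum_nat_const -[RHS]sum1_card (partition_big_imset phi) /=.
apply: eq_bigr => _ /imsetP[u0 _ ->]; rewrite -(card_fiber u0) -sum1_card.
by apply: eq_bigl => u; rewrite inE.
Qed.

Lemma sqrB_pchar2 (R : comNzRingType) (R2 : 2%N \in [pchar R]) (x y : R) :
  (x - y) ^+ 2 = x ^+ 2 - y ^+ 2.
Proof. by rewrite -!(pFrobenius_autE R2) pFrobenius_autB_comm //; exact: mulrC. Qed.

Lemma pchar2_of_even_card (F : finFieldType) : ~~ odd #|F| -> 2%N \in [pchar F].
Proof.
move=> evenF; have [p p_pr pcharFp] := finPcharP F.
suff -> : 2%N = p by [].
have : (2 %| p ^ logn p #|F|)%N by rewrite -(card_pprimeChar pcharFp) dvdn2.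
by rewrite Euclid_dvdX // dvdn_prime2 // => /andP[/eqP].
Qed.

Lemma card_image_quadratic_pchar2 (F : finFieldType) (F2 : 2%N \in [pchar F])
  (C B : F) : C != 0 -> B != 0 ->
  (2 * #|[set (C * u ^+ 2 + B * u)%R | u : F]|)%N = #|F|.
Proof.
move=> C0 B0; rewrite -(@card_imset_additive _ _ (fun u => C * u ^+ 2 + B * u)).
  have -> : [set u | C * u ^+ 2 + B * u == 0] = [set 0; - B / C].
    apply/setP => u; rewrite !inE.
    have -> : C * u ^+ 2 + B * u = u * (C * u + B) by ring.
    rewrite mulf_eq0 addr_eq0; congr (_ || _).
    by apply/eqP/eqP => [<- | ->]; field.
  by rewrite cards2 eq_sym mulf_eq0 oppr_eq0 invr_eq0 negb_or B0 C0 mulnC.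
by move=> u v /=; rewrite sqrrD mulrn_pchar // addr0; ring.
Qed.

Lemma horner_size3 (R : comNzRingType) (p : {poly R}) (x : R) :
  (size p <= 3)%N -> p.[x] = p`_0 + p`_1 * x + p`_2 * x ^+ 2.
Proof.
move=> sp; rewrite (horner_coef_wide x sp) !big_ord_recr big_ord0 /=.
by rewrite expr0 expr1 mulr1 add0r.
Qed.

Lemma horner_size3_pchar2 (R : comNzRingType) (R2 : 2%N \in [pchar R])
  (p : {poly R}) (alpha x : R) : (size p <= 3)%N ->
  p.[x] = p.[alpha] + p`_1 * (x - alpha) + p`_2 * (x - alpha) ^+ 2.
Proof. by move=> sp; rewrite !horner_size3 // sqrB_pchar2 //; ring. Qed.

Definition meeting_coefs (F : finFieldType) (f : {poly F}) (alpha beta b : F) :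
    {set F} :=
  [set a | [exists x, beta + b * (x - alpha) + a * (x - alpha) ^+ 2 == f.[x]]].

Lemma card_meeting_coefs (F : finFieldType) (F2 : 2%N \in [pchar F])
  (f : {poly F}) (alpha beta b : F) :
  (size f <= 3)%N -> f.[alpha] != beta -> b != f`_1 ->
  (2 * #|meeting_coefs f alpha beta b| <= #|F|)%N.
Proof.
move=> sf fab bf1; set C := f.[alpha] - beta; set B := f`_1 - b.
have C0 : C != 0 by rewrite subr_eq0.
have B0 : B != 0 by rewrite subr_eq0 eq_sym.
rewrite -(card_image_quadratic_pchar2 F2 C0 B0) leq_mul2l /=.
set Q := [set _ | u : F].
rewrite -(card_imset Q (addrI f`_2)); apply/subset_leq_card/subsetP => a.
rewrite inE => /existsP[x /eqP]; rewrite (horner_size3_pchar2 F2 alpha x sf).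
set t := x - alpha => Ea.
have Et : (a - f`_2) * t ^+ 2 = C + B * t.
  have -> : (a - f`_2) * t ^+ 2 = beta + b * t + a * t ^+ 2 - beta - b * t - f`_2 * t ^+ 2.
    by ring.
  by rewrite Ea /C /B; ring.
have t0 : t != 0.
  by apply: contra_neq C0 => t0; move: Et; rewrite t0 expr0n mulr0 mulr0 addr0.
apply/imsetP; exists (a - f`_2); last by ring.
apply/imsetP; exists t^-1 => //.
by apply: (mulIf (expf_neq0 2 t0)); rewrite Et; field.
Qed.

Section Slices.

Variables T1 T2 : finType.

Definition slice (X : {set T1 * T2}) (b : T1) : {set T1 * T2} :=
  [set p in X | p.1 == b].

Lemma card_slice (X : {set T1 * T2}) (b : T1) :
  #|slice X b| = #|[set p.2 | p in slice X b]|.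
Proof.
apply/esym/card_in_imset => -[b1 a1] [b2 a2].
by rewrite !inE /= => /andP[_ /eqP ->] /andP[_ /eqP ->] ->.
Qed.

Lemma card_slice_le (X : {set T1 * T2}) (b : T1) : (#|slice X b| <= #|T2|)%N.
Proof. by rewrite card_slice max_card. Qed.

Lemma card_sum_slices (X : {set T1 * T2}) : #|X| = (\sum_b #|slice X b|)%N.
Proof.
rewrite -sum1_card (partition_big (fun p : T1 * T2 => p.1) predT) //=.
by apply: eq_bigr => b _; rewrite -sum1_card; apply: eq_bigl => p; rewrite inE.
Qed.

Lemma card_le_slices (X : {set T1 * T2}) (b0 : T1) (n k : nat) :
  (forall b, b != b0 -> n * #|slice X b| <= k)%N ->
  (n * #|X| <= #|T1|.-1 * k + n * #|slice X b0|)%N.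
Proof.
move=> le_slice; rewrite card_sum_slices big_distrr (bigD1 b0) //= addnC leq_add2r.
have -> : #|T1|.-1 = #|predC1 b0| by rewrite cardC1.
rewrite -sum_nat_const.
by apply: leq_sum => b; apply: le_slice.
Qed.

End Slices.

Definition coef12 {R : nzRingType} (p : {poly R}) : R * R := (p`_1, p`_2).

Lemma eq_poly_size3 (R : comNzRingType) (p r : {poly R}) (x : R) :
  (size p <= 3)%N -> (size r <= 3)%N -> coef12 p = coef12 r -> p.[x] = r.[x] ->
  p = r.
Proof.
move=> sp sr [p1 p2]; rewrite !horner_size3 // p1 p2 => /addIr/addIr p0.
apply/polyP => -[|[|[|i]]] //.
by rewrite !nth_default // (leq_trans _ (isT : (3 <= i.+3)%N)).
Qed.

Lemma coef12_inj_intersecting (F : finFieldType) (U : seq {poly F}) :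
  (forall f, f \in U -> (size f <= 3)%N) -> intersecting U -> {in U &, injective coef12}.
Proof.
move=> szU intU f g fU gU efg; have [x fgx] := intU f g fU gU.
exact: eq_poly_size3 (szU f fU) (szU g gU) efg fgx.
Qed.

Definition coef12_set {R : finNzRingType} (L : seq {poly R}) : {set R * R} :=
  [set p in map coef12 L].

Section IntersectingFamily.

Variables (F : finFieldType) (alpha beta : F) (U : seq {poly F}).
Hypotheses (F2 : 2%N \in [pchar F]) (szU : forall f, f \in U -> (size f <= 3)%N)
  (intU : intersecting U).

Lemma card_coef12_set (L : seq {poly F}) :
  uniq L -> {subset L <= U} -> #|coef12_set L| = size L.
Proof.
move=> uL sLU; rewrite cardsE -(size_map coef12 L); apply/card_uniqP.
rewrite map_inj_in_uniq //.
by move=> g h /sLU gU /sLU hU; apply: (coef12_inj_intersecting szU intU).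
Qed.

Lemma card_slice_coef12_set (L : seq {poly F}) (f : {poly F}) (b : F) :
  {subset L <= U} -> f \in U -> f.[alpha] != beta -> b != f`_1 ->
  {in L, forall h : {poly F}, h`_1 = b -> h.[alpha] = beta} ->
  (2 * #|slice (coef12_set L) b| <= #|F|)%N.
Proof.
move=> sLU fU fab bf1 Lab; apply: leq_trans (card_meeting_coefs F2 (szU fU) fab bf1).
rewrite leq_mul2l card_slice; apply/orP/or_intror/subset_leq_card/subsetP.
move=> a /imsetP[p /setIdP[/[!inE] /mapP[h hL ->]]] /= /eqP h1 ->.
have [x hfx] := intU (sLU _ hL) fU.
apply/existsP; exists x.
by rewrite -(Lab h hL h1) -h1 -horner_size3_pchar2 ?hfx ?szU ?sLU.
Qed.

Lemma two_size_le_slices_coef12_set (L : seq {poly F}) (f : {poly F}) :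
  uniq L -> {subset L <= U} -> f \in U -> f.[alpha] != beta ->
  {in L, forall h : {poly F}, h`_1 != f`_1 -> h.[alpha] = beta} ->
  (2 * size L <= #|F|.-1 * #|F| + 2 * #|slice (coef12_set L) (f`_1)%R|)%N.
Proof.
move=> uL sLU fU fab Lab; rewrite -card_coef12_set //.
apply: card_le_slices => b bf1.
apply: (card_slice_coef12_set sLU fU fab bf1) => h hL h1.
by apply: Lab; rewrite ?h1.
Qed.

End IntersectingFamily.

Theorem lemma6 (F : finFieldType) (U H : seq {poly F}) (alpha beta : F) :
  ~~ odd #|F| ->
  uniq U ->
  (forall f, f \in U -> (size f <= 3)%N) ->
  intersecting U ->
  (#|F| ^ 2 + #|F| < 2 * size U)%N ->
  uniq H ->
  {subset H <= U} ->
  (#|F| ^ 2 < 2 * size H)%N ->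
  (forall h, h \in H -> h.[alpha] = beta) ->
  forall f, f \in U -> f.[alpha] = beta.
Proof.
move=> evenF uU szU intU ltU uH sHU ltH Hab f fU; apply/eqP; apply: contraT => fab.
have F2 := pchar2_of_even_card evenF.
have q_sqr : (#|F|.-1 * #|F| + #|F| = #|F| ^ 2)%N.
  by rewrite addnC -mulSn prednK ?mulnn //; apply/card_gt0P; exists 0.
have [/hasP[g gU /andP[gab gf1]] | /hasPn badU] :=
  boolP (has (fun g => (g.[alpha] != beta) && (g`_1 != f`_1)) U).
- have f1g1 : f`_1 != g`_1 by rewrite eq_sym.
  have := two_size_le_slices_coef12_set F2 szU intU uH sHU fU fab (fun h hH _ => Hab h hH).
  have := card_slice_coef12_set F2 szU intU sHU gU gab f1g1 (fun h hH _ => Hab h hH).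
  lia.
- have goodU : {in U, forall h : {poly F}, h`_1 != f`_1 -> h.[alpha] = beta}.
    by move=> h hU h1; apply/eqP; move: (badU h hU); rewrite h1 andbT negbK.
  have := two_size_le_slices_coef12_set F2 szU intU uU (fun h hU => hU) fU fab goodU.
  have : (#|slice (coef12_set U) (f`_1)%R| <= #|F|)%N := card_slice_le _ _.
  lia.
Qed.
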